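(* Let $P_0,P_1,P_2$ be jointly distributed nonnegative random variables with $\mathbb E[P_1]>0$, and let $0<\varepsilon\le 1/10$. If $\mathbb E[P_0]\le\varepsilon$, $\mathbb E[P_1]\ge 1-\varepsilon$ and $\mathbb E[P_2]\le 1$, then there exists an outcome $o$ such that $P_0(o)\le\delta\cdot P_1(o)$, $P_2(o)\le(1+\delta)\cdot P_1(o)$, and $P_1(o)>0$, where $\delta=2\sqrt{\varepsilon}$. *)

From HB Require Import structures.
From mathcomp Require Import all_boot all_order all_algebra.
From mathcomp Require Import all_classical all_reals all_analysis.
Set Implicit Arguments. Unset Strict Implicit. Unset Printing Implicit Defensive.
Import Order.TTheory GRing.Theory Num.Theory.

From HB Require Import structures.
From mathcomp Require Import all_boot all_order all_algebra.
From mathcomp Require Import all_classical all_reals all_analysis.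
From mathcomp Require Import ring lra.
From mathcomp Require Import measurable_realfun.
Set Implicit Arguments. Unset Strict Implicit. Unset Printing Implicit Defensive.
Import Order.TTheory GRing.Theory Num.Theory.
Local Open Scope ring_scope.

(* Argue by contradiction.  If no outcome works, then at every outcome either
   P0 > delta P1 or P2 > (1 + delta) P1 (or P1 = 0), so pointwise
   P1 <= P0 / delta + P2 / (1 + delta).  Taking expectations,
   1 - eps <= E[P1] <= eps / delta + 1 / (1 + delta) = s / 2 + 1 / (1 + 2 s)
   with s = sqrt eps, whereas s / 2 + 1 / (1 + 2 s) < 1 - s^2 for 0 < s < 1/2. *)

Lemma good_or_le_invM (R : realFieldType) (a b x0 x1 x2 : R) :
  0 < a -> 0 < b -> 0 <= x0 -> 0 <= x1 -> 0 <= x2 ->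
  [/\ x0 <= a * x1, x2 <= b * x1 & 0 < x1] \/ x1 <= a^-1 * x0 + b^-1 * x2.
Proof.
move=> a0 b0 x00 x10 x20.
have invM_ge0 c x : 0 < c -> 0 <= x -> 0 <= c^-1 * x.
  by move=> c0 x_ge0; rewrite mulr_ge0 // invr_ge0 ltW.
have [->|x1_neq0] := eqVneq x1 0; first by right; rewrite addr_ge0 ?invM_ge0.
have x1_gt0 : 0 < x1 by rewrite lt_def x1_neq0.
have [hx0|hx0] := leP x0 (a * x1); last first.
  right; rewrite -[x1]addr0 lerD ?invM_ge0 //.
  by rewrite ler_pdivlMl // ltW.
have [hx2|hx2] := leP x2 (b * x1); first by left.
right; rewrite -[x1]add0r lerD ?invM_ge0 //.
by rewrite ler_pdivlMl // ltW.
Qed.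

Lemma inv_tradeoff_lt (R : realFieldType) (s : R) :
  0 < s -> s < 1 / 2 -> (2 * s)^-1 * s ^+ 2 + (1 + 2 * s)^-1 < 1 - s ^+ 2.
Proof.
move=> s0 s_lt_half; rewrite -subr_gt0.
have -> : 1 - s ^+ 2 - ((2 * s)^-1 * s ^+ 2 + (1 + 2 * s)^-1) =
          s * (1 - 2 * s) * (3 + 2 * s) / (2 * (1 + 2 * s)).
  by field; rewrite !gt_eqF // ?addr_gt0 // ?mulr_gt0.
by rewrite divr_gt0 ?mulr_gt0 //; lra.
Qed.

Local Open Scope ereal_scope.

Lemma ge0_le_integral_lincomb (R : realType) (d : measure_display)
    (T : measurableType d) (mu : {measure set T -> \bar R}) (D : set T)
    (f g h : T -> R) (a b : R) :
  measurable D -> (0 <= a)%R -> (0 <= b)%R ->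
  measurable_fun D f -> measurable_fun D g -> measurable_fun D h ->
  (forall x, D x -> 0 <= f x)%R -> (forall x, D x -> 0 <= g x)%R ->
  (forall x, D x -> 0 <= h x)%R ->
  (forall x, D x -> f x <= a * g x + b * h x)%R ->
  \int[mu]_(x in D) (f x)%:E <=
    a%:E * \int[mu]_(x in D) (g x)%:E + b%:E * \int[mu]_(x in D) (h x)%:E.
Proof.
move=> mD a0 b0 mf mg mh f0 g0 h0 fgh.
have mag : measurable_fun D (fun x => (a * g x)%:E).
  by apply/measurable_EFinP; apply: measurable_funM => //; exact: measurable_cst.
have mbh : measurable_fun D (fun x => (b * h x)%:E).
  by apply/measurable_EFinP; apply: measurable_funM => //; exact: measurable_cst.
rewrite -ge0_integralZl_EFin //; last exact/measurable_EFinP.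
rewrite -ge0_integralZl_EFin //; last exact/measurable_EFinP.
rewrite -ge0_integralD //; first last.
- by move=> x Dx; rewrite lee_fin mulr_ge0 ?h0.
- by move=> x Dx; rewrite lee_fin mulr_ge0 ?g0.
apply: ge0_le_integral => //.
- exact/measurable_EFinP.
- exact: emeasurable_funD.
Qed.

Theorem fact3p2 (R : realType) (d : measure_display) (T : measurableType d)
  (P : probability T R) (P0 P1 P2 : T -> R)
  (mP0 : measurable_fun setT P0) (mP1 : measurable_fun setT P1)
  (mP2 : measurable_fun setT P2)
  (nP0 : forall o, (0 <= P0 o)%R) (nP1 : forall o, (0 <= P1 o)%R)
  (nP2 : forall o, (0 <= P2 o)%R)
  (eps : R) (heps0 : (0 < eps)%R) (heps1 : (eps <= 1 / 10)%R)
  (hE1pos : 0 < \int[P]_o (P1 o)%:E)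
  (hE0 : \int[P]_o (P0 o)%:E <= eps%:E)
  (hE1 : (1 - eps)%:E <= \int[P]_o (P1 o)%:E)
  (hE2 : \int[P]_o (P2 o)%:E <= 1) :
  let delta := (2 * Num.sqrt eps)%R in
  exists o : T, (P0 o <= delta * P1 o)%R /\ (P2 o <= (1 + delta) * P1 o)%R
    /\ (0 < P1 o)%R.
Proof.
move=> delta; set s := Num.sqrt eps.
have s_gt0 : (0 < s)%R by rewrite sqrtr_gt0.
have eps_sqr : eps = (s ^+ 2)%R by rewrite sqr_sqrtr // ltW.
have s_lt_half : (s < 1 / 2)%R by move: heps1; rewrite eps_sqr; nra.
have delta_gt0 : (0 < delta)%R by rewrite mulr_gt0.
have delta1_gt0 : (0 < 1 + delta)%R by rewrite addr_gt0.
apply: contrapT => no_good.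
have P1_le o : (P1 o <= delta^-1 * P0 o + (1 + delta)^-1 * P2 o)%R.
  have [[*]|//] := good_or_le_invM delta_gt0 delta1_gt0 (nP0 o) (nP1 o) (nP2 o).
  by case: no_good; exists o.
have inv_delta_ge0 : (0 <= delta^-1)%R by rewrite invr_ge0 ltW.
have inv_delta1_ge0 : (0 <= (1 + delta)^-1)%R by rewrite invr_ge0 ltW.
have E1_le := ge0_le_integral_lincomb P measurableT inv_delta_ge0 inv_delta1_ge0
  mP1 mP0 mP2 (fun o _ => nP1 o) (fun o _ => nP0 o) (fun o _ => nP2 o)
  (fun o _ => P1_le o).
have : (1 - eps <= delta^-1 * eps + (1 + delta)^-1 * 1)%R.
  rewrite -lee_fin; apply: le_trans hE1 (le_trans E1_le _).
  by rewrite EFinD !EFinM; apply: leeD; apply: lee_wpmul2l; rewrite ?lee_fin.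
apply/negP; rewrite -ltNge mulr1 eps_sqr.
exact: inv_tradeoff_lt.
Qed.
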